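(* Let $m$ be an odd positive integer and $c$ an integer relatively prime to $m$ such that $\sigma_1$ is an integer with $\sigma_1^2\equiv c\pmod m$. Let $u$ be an integer with $2\sigma_1 u\equiv 1\pmod m$, and define $\sigma_{n+1}=(c-\sigma_n^2)u+\sigma_n$ for $n\ge 1$. Then $\{\sigma_n\}_{n\ge1}$ is a Cauchy sequence in $(D_m,d)$.
   Context: $D_m$ is the set of rationals $a/b$ (with $a,b$ coprime integers) such that $\gcd(b,m)=1$. For $a/b\in D_m$ in lowest terms, $|a/b|_m=m^{-k}$ where $k$ is the largest integer with $m^k\mid a$, and $|0|_m=0$; the metric is $d(u,v)=|u-v|_m$. *)

From mathcomp Require Import all_boot all_order all_algebra.
Set Implicit Arguments. Unset Strict Implicit. Unset Printing Implicit Defensive.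
Import Order.TTheory GRing.Theory Num.Theory.
Local Open Scope ring_scope.

(* m-adic valuation of a nonzero integer a: the largest k with m^k | a.
   For m >= 2 and a <> 0 any such k satisfies m^k <= |a| < |a|+1, so the
   bounded max below is exactly the largest such k. *)
Definition mval (m : nat) (a : int) : nat :=
  (\max_(k < `|a|%N.+1 | (m ^ k %| `|a|%N)%N) k)%N.

Definition inDm (m : nat) (x : rat) : bool := coprime `|denq x|%N m.

Definition madic_norm (m : nat) (x : rat) : rat :=
  if x == 0 then 0 else ((m%:R : rat) ^+ mval m (numq x))^-1.

Definition madic_dist (m : nat) (x y : rat) : rat := madic_norm m (x - y).

Definition madic_cauchy (m : nat) (s : nat -> rat) : Prop :=
  (forall n, inDm m (s n)) /\
  forall eps : rat, 0 < eps -> exists N : nat,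
    forall p q : nat, (N <= p)%N -> (N <= q)%N -> madic_dist m (s p) (s q) < eps.

(* The recursion is a Newton-type iteration for a square root of c modulo powers
   of m.  If M^(n+1) divides e = c - s^2 and M divides 2su - 1, the next term
   s' = s + eu satisfies c - s'^2 = e(1 - 2su) - (eu)^2, so M^(n+2) divides the
   new error, and 2s'u - 1 = (2su - 1) + 2eu^2 stays divisible by M.  Hence
   consecutive terms differ by eu, a multiple of M^(n+1); by telescoping,
   sigma_p and sigma_q agree modulo m^p for p <= q, i.e. |sigma_p - sigma_q|_m
   <= m^-p, which tends to 0.  All terms are integers, so they lie in D_m. *)
From mathcomp Require Import all_boot all_order all_algebra.
From mathcomp Require Import ring.

Set Implicit Arguments.
Unset Strict Implicit.
Unset Printing Implicit Defensive.
Import Order.TTheory GRing.Theory Num.Theory.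
Local Open Scope ring_scope.

Lemma inDm_int (m : nat) (a : int) : inDm m a%:~R.
Proof. by rewrite /inDm denq_int coprime1n. Qed.

Lemma mval_ge (m k : nat) (a : int) :
  (1 < m)%N -> a != 0 -> (m%:Z ^+ k %| a)%Z -> (k <= mval m a)%N.
Proof.
move=> m1 a0; rewrite dvdzE abszX => dvd_a.
have k_lt : (k < `|a|.+1)%N.
  rewrite ltnS (leq_trans (ltnW (ltn_expl k m1))) //.
  by rewrite dvdn_leq ?absz_gt0.
exact: (leq_bigmax_cond (Ordinal k_lt) dvd_a).
Qed.

Lemma madic_norm_int_le (m k : nat) (a : int) :
  (1 < m)%N -> (m%:Z ^+ k %| a)%Z ->
  madic_norm m a%:~R <= ((m%:R : rat) ^+ k)^-1.
Proof.
move=> m1 dvd_a; rewrite /madic_norm intr_eq0.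
have m_gt0 : (0 : rat) < m%:R by rewrite ltr0n ltnW.
have [_ | a0] := eqVneq a 0; first by rewrite invr_ge0 exprn_ge0 // ltW.
rewrite numq_int lef_pV2 ?posrE ?exprn_gt0 // -!natrX ler_nat.
by rewrite leq_pexp2l ?(ltnW m1) ?mval_ge.
Qed.

Lemma dvdz_telescope (M : int) (s : nat -> int) (p q : nat) :
  (forall n, (M ^+ n %| s n.+1 - s n)%Z) -> (p <= q)%N ->
  (M ^+ p %| s q - s p)%Z.
Proof.
move=> dvd_step; elim: q => [|q IHq]; first by rewrite leqn0 => /eqP ->; rewrite subrr.
rewrite leq_eqVlt => /orP[/eqP <- | ]; first by rewrite subrr.
rewrite ltnS => le_pq.
rewrite -(subrK (s q) (s q.+1)) -addrA rpredD ?IHq //.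
exact: dvdz_trans (dvdz_exp2l _ le_pq) (dvd_step q).
Qed.

Lemma madic_cauchy_int (m : nat) (s : nat -> int) :
  (1 < m)%N -> (forall p q, (p <= q)%N -> (m%:Z ^+ p %| s q - s p)%Z) ->
  madic_cauchy m (fun n => (s n)%:~R).
Proof.
move=> m1 dvd_s; split=> [n | eps eps_gt0]; first exact: inDm_int.
pose N := Num.Def.archi_bound eps^-1.
have N_gt : eps^-1 < N%:R by apply: archi_boundP; rewrite invr_ge0 ltW.
exists N => p q le_Np le_Nq.
have dvd_pq : (m%:Z ^+ N %| s p - s q)%Z.
  have [le_pq | /ltnW le_qp] := leqP p q.
    by rewrite -opprB rpredN (dvdz_trans (dvdz_exp2l _ le_Np)) ?dvd_s.
  by rewrite (dvdz_trans (dvdz_exp2l _ le_Nq)) ?dvd_s.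
rewrite /madic_dist -intrB (le_lt_trans (madic_norm_int_le m1 dvd_pq)) //.
rewrite invf_plt ?posrE ?exprn_gt0 ?ltr0n ?(ltnW m1) // (lt_le_trans N_gt) //.
by rewrite -natrX ler_nat (ltnW (ltn_expl N m1)).
Qed.

Section NewtonIteration.

Variables (M c u : int) (sigma : nat -> int).
Hypothesis sigma1_sqr : (sigma 1%N ^+ 2 == c %[mod M])%Z.
Hypothesis sigma1_inv : (2 * sigma 1%N * u == 1 %[mod M])%Z.
Hypothesis sigmaS : forall n, (1 <= n)%N -> sigma n.+1 = (c - sigma n ^+ 2) * u + sigma n.

Lemma newton_invariant n :
  (M ^+ n.+1 %| c - sigma n.+1 ^+ 2)%Z /\ (M %| 2 * sigma n.+1 * u - 1)%Z.
Proof.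
elim: n => [|n [dvd_e dvd_inv]].
  by rewrite expr1 -!eqz_mod_dvd eq_sym.
rewrite sigmaS //; set s := sigma n.+1; set e := c - s ^+ 2.
have dvd_eu2 : (M ^+ n.+2 %| (e * u) ^+ 2)%Z.
  have le_2n : (n.+2 <= n.+1 + n.+1)%N by rewrite addnS ltnS leq_addr.
  by rewrite exprMn dvdz_mulr // (dvdz_trans (dvdz_exp2l M le_2n)) // exprD dvdz_mul.
split.
  have -> : c - (e * u + s) ^+ 2 = - (e * (2 * s * u - 1) + (e * u) ^+ 2).
    by rewrite /e; ring.
  by rewrite rpredN rpredD // exprS mulrC dvdz_mul.
have -> : 2 * (e * u + s) * u - 1 = (2 * s * u - 1) + e * (2 * u * u) by ring.
by rewrite rpredD // dvdz_mulr // -(expr1 M) (dvdz_trans (dvdz_exp2l M (ltn0Sn n)) dvd_e).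
Qed.

Lemma newton_step_dvd n : (M ^+ n.+1 %| sigma n.+2 - sigma n.+1)%Z.
Proof. by rewrite sigmaS // addrK dvdz_mulr // (newton_invariant n).1. Qed.

End NewtonIteration.

Theorem mainTheorem9 (m : nat) (c u : int) (sigma : nat -> int) :
  (0 < m)%N -> odd m -> (1 < m)%N ->
  coprimez c (m%:Z) ->
  (sigma 1%N ^+ 2 == c %[mod m%:Z])%Z ->
  (2 * sigma 1%N * u == 1 %[mod m%:Z])%Z ->
  (forall n : nat, (1 <= n)%N -> sigma n.+1 = (c - sigma n ^+ 2) * u + sigma n) ->
  madic_cauchy m (fun n : nat => (sigma n.+1)%:~R).
Proof.
(* Oddness of m and coprimality of c only matter for u to exist. *)
move=> _ _ m1 _ sigma1_sqr sigma1_inv sigmaS.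
have step n : (m%:Z ^+ n %| sigma n.+2 - sigma n.+1)%Z.
  exact: dvdz_trans (dvdz_exp2l _ (leqnSn n)) (newton_step_dvd sigma1_sqr sigma1_inv sigmaS n).
apply: (madic_cauchy_int (s := fun n => sigma n.+1)) => // p q.
exact: (dvdz_telescope (s := fun n => sigma n.+1)).
Qed.
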